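(* Let $a_n=\left|\Pi_n\wr C_2(1^11^1,1^11^2)\right|$. Then for $n\ge3$, $a_n=2a_{n-1}+(n-1)a_{n-2}$.
   Context: For $n\ge0$ let $[n]=\{1,\dots,n\}$. A $2$-colored set partition of $[n]$ is a set partition of $[n]$ together with an assignment of a color from $\{1,2\}$ to each element; $\Pi_n\wr C_2$ is the set of these. For a set $S$ of patterns, $\Pi_n\wr C_2(S)$ is the set of such colored partitions avoiding every pattern in $S$ in the pattern sense. For the patterns used here: $\sigma$ contains $1^11^1$ iff two elements in the same block have the same color; $\sigma$ contains $1^11^2$ iff there are $i<j$ in the same block with $i$ colored $1$ and $j$ colored $2$. *)

From mathcomp Require Import all_boot.
Set Implicit Arguments. Unset Strict Implicit. Unset Printing Implicit Defensive.

(* [n] = {1,...,n} is modelled by 'I_n (element i+1 <-> ordinal i; order preserved).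
   Colors {1,2} are modelled by 'I_2: color 1 = ord0, color 2 = ord_max (value 1). *)
Definition color1 : 'I_2 := ord0.
Definition color2 : 'I_2 := ord_max.

Definition colored_partition (n : nat) : finType :=
  ({set {set 'I_n}} * {ffun 'I_n -> 'I_2})%type.

Definition is_colored_partition n (s : colored_partition n) : bool :=
  partition s.1 [set: 'I_n].

Definition contains_1111 n (s : colored_partition n) : bool :=
  [exists B in s.1, exists i in B, exists j in B, (i != j) && (s.2 i == s.2 j)].

Definition contains_1112 n (s : colored_partition n) : bool :=
  [exists B in s.1, exists i in B, exists j in B,
     [&& (i < j)%N, s.2 i == color1 & s.2 j == color2]].

Definition a (n : nat) : nat :=
  #|[set s : colored_partition n |
      [&& is_colored_partition s, ~~ contains_1111 s & ~~ contains_1112 s]]|.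

From mathcomp Require Import all_boot.
Set Implicit Arguments. Unset Strict Implicit. Unset Printing Implicit Defensive.

(* In a partition avoiding 1^1 1^1 the elements of a block carry pairwise distinct colors, so
   blocks have at most two elements; avoiding 1^1 1^2 then forces the smaller element of a
   two-element block to have color 2 and the larger one color 1.  These colored partitions are
   therefore the involutions of [n] whose fixed points are 2-colored.  Counting such involutions
   on any finite set by the fate of one element m (a fixed point of either color, or swapped with
   one of the other elements) gives the recurrence. *)

Lemma card_in_bij (T T' : finType) (A : {set T}) (B : {set T'})
    (f : T -> T') (g : T' -> T) :
  {in A, forall x, f x \in B} -> {in B, forall y, g y \in A} ->
  {in A, cancel f g} -> {in B, cancel g f} -> #|A| = #|B|.
Proof.
move=> fAB gBA fK gK; rewrite -(card_in_imset (can_in_inj fK)).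
apply: eq_card => y; apply/imsetP/idP => [[x xA ->]|yB]; first exact: fAB.
by exists (g y); rewrite ?gBA ?gK.
Qed.

Definition ffun_upd (T : finType) (U : Type) (f : {ffun T -> U}) (a : T) (v : U) :
  {ffun T -> U} := [ffun x => if x == a then v else f x].

Lemma ffun_updE (T : finType) (U : Type) (f : {ffun T -> U}) a v x :
  ffun_upd f a v x = if x == a then v else f x.
Proof. by rewrite ffunE. Qed.

Lemma ord2P (i : 'I_2) : i = color1 \/ i = color2.
Proof. by case: i => -[|[|//]] lt_i2; [left | right]; apply: val_inj. Qed.

Lemma ord2_neq_trans (i j k : 'I_2) : i != j -> i != k -> j = k.
Proof. by case: (ord2P i) => ->; case: (ord2P j) => ->; case: (ord2P k) => ->. Qed.

Definition pair_color n (x y : 'I_n) : 'I_2 := if x < y then color2 else color1.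

Lemma pair_color_swap n (x y : 'I_n) : x != y -> pair_color x y != pair_color y x.
Proof.
rewrite /pair_color => neq_xy; case: ltngtP => // /val_inj eq_xy.
by rewrite eq_xy eqxx in neq_xy.
Qed.

Section ColoredMatchings.

Variable n : nat.
Local Notation matching := ({ffun 'I_n -> 'I_n} * {ffun 'I_n -> 'I_2})%type.
Implicit Types (A : {set 'I_n}) (p : {ffun 'I_n -> 'I_n}) (c : {ffun 'I_n -> 'I_2}).

Definition matching_at A p c x :=
  if x \in A then (p (p x) == x) && ((p x != x) ==> (c x == pair_color x (p x)))
  else (p x == x) && (c x == color1).

Definition colored_matchings A :=
  [set pc : matching | [forall x, matching_at A pc.1 pc.2 x]].

Lemma colored_matchingsP A p c :
  reflect (forall x, matching_at A p c x) ((p, c) \in colored_matchings A).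
Proof. by rewrite inE; apply: forallP. Qed.

Lemma matching_at_in A p c x : x \in A -> matching_at A p c x ->
  p (p x) = x /\ (p x != x -> c x = pair_color x (p x)).
Proof. by rewrite /matching_at => ->; case/andP => /eqP -> /implyP H; split => // /H /eqP. Qed.

Lemma matching_at_out A p c x : x \notin A -> matching_at A p c x ->
  p x = x /\ c x = color1.
Proof. by rewrite /matching_at => /negbTE ->; case/andP => /eqP -> /eqP. Qed.

Lemma colored_matchingsTP p c :
  reflect (involutive p /\ forall x, p x != x -> c x = pair_color x (p x))
          ((p, c) \in colored_matchings [set: 'I_n]).
Proof.
apply: (iffP (colored_matchingsP _ _ _)) => [Hpc | [pK pc] x].
  by split=> x; have [] := matching_at_in (in_setT x) (Hpc x).
by rewrite /matching_at in_setT pK eqxx; apply/implyP => /pc ->.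
Qed.

Lemma card_colored_matchings_fixed A m : m \in A ->
  #|[set pc in colored_matchings A | pc.1 m == m]| = 2 * #|colored_matchings (A :\ m)|.
Proof.
move=> mA; rewrite -[2 * _]mulnC -[X in _ * X]card_ord -cardsT -cardsX.
have mAm : m \notin A :\ m by rewrite !inE eqxx.
apply: (card_in_bij (f := fun pc => ((pc.1, ffun_upd pc.2 m color1), pc.2 m))
                    (g := fun q => (q.1.1, ffun_upd q.1.2 m q.2))).
- move=> [p c]; rewrite !inE /= andbT => /andP [/forallP Hpc /eqP pm].
  apply/forallP => x; have := Hpc x; rewrite /matching_at !inE ffun_updE.
  by case: (x =P m) => [->|_] //=; rewrite pm !eqxx.
- move=> [[p c] col]; rewrite !inE /= andbT => /forallP Hpc.
  have [pm _] := matching_at_out mAm (Hpc m).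
  rewrite pm eqxx andbT; apply/forallP => x; have := Hpc x.
  rewrite /matching_at !inE ffun_updE.
  by case: (x =P m) => [->|_] //=; rewrite mA !pm !eqxx.
- move=> [p c] _; congr (_, _); apply/ffunP => x; rewrite !ffun_updE.
  by case: eqP => [->|].
- move=> [[p c] col]; rewrite !inE /= andbT => /forallP Hpc.
  have [_ cm] := matching_at_out mAm (Hpc m).
  rewrite /= ffun_updE eqxx; congr (_, _, _); apply/ffunP => x; rewrite !ffun_updE.
  by case: eqP => [->|]; rewrite ?cm.
Qed.

Lemma card_colored_matchings_paired A m k :
  m \in A -> k \in A -> k != m ->
  #|[set pc in colored_matchings A | pc.1 m == k]| = #|colored_matchings (A :\ m :\ k)|.
Proof.
move=> mA kA km; have mk : m != k by rewrite eq_sym.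
set B := A :\ m :\ k.
have mB : m \notin B by rewrite !inE eqxx andbF.
have kB : k \notin B by rewrite !inE eqxx.
have inB x : x != m -> x != k -> (x \in B) = (x \in A).
  by move=> /negbTE xm /negbTE xk; rewrite !inE xm xk.
apply: (card_in_bij
  (f := fun pc => (ffun_upd (ffun_upd pc.1 m m) k k,
                   ffun_upd (ffun_upd pc.2 m color1) k color1))
  (g := fun pc => (ffun_upd (ffun_upd pc.1 m k) k m,
                   ffun_upd (ffun_upd pc.2 m (pair_color m k)) k (pair_color k m)))).
- move=> [p c]; rewrite inE => /andP [/colored_matchingsP Hpc /= /eqP pm].
  have [ppm _] := matching_at_in mA (Hpc m); rewrite pm in ppm.
  apply/colored_matchingsP => x; rewrite /matching_at !ffun_updE.
  case: (x =P k) => [->|/eqP xk]; first by rewrite (negbTE kB) !eqxx.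
  case: (x =P m) => [->|/eqP xm]; first by rewrite (negbTE mB) !eqxx.
  rewrite inB //; case xA: (x \in A); last first.
    have [-> ->] := matching_at_out (negbT xA) (Hpc x).
    by rewrite ?(negbTE xk) ?(negbTE xm) !eqxx.
  have [ppx cx] := matching_at_in xA (Hpc x).
  have pxm : p x != m by apply: contraNneq xk => pxm; rewrite -ppx pxm pm.
  have pxk : p x != k by apply: contraNneq xm => pxk; rewrite -ppx pxk ppm.
  by rewrite (negbTE pxm) (negbTE pxk) ppx eqxx; apply/implyP => /cx ->.
- move=> [p c] /colored_matchingsP Hpc.
  have [pm _] := matching_at_out mB (Hpc m); have [pk _] := matching_at_out kB (Hpc k).
  rewrite inE !ffun_updE (negbTE mk) !eqxx andbT.
  apply/colored_matchingsP => x; rewrite /matching_at !ffun_updE.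
  case: (x =P k) => [->|/eqP xk]; first by rewrite kA (negbTE mk) !eqxx.
  case: (x =P m) => [->|/eqP xm]; first by rewrite mA !eqxx /= implybT.
  have := Hpc x; rewrite /matching_at inB //; case: (x \in A); last first.
    by case/andP => /eqP -> ->; rewrite ?(negbTE xk) ?(negbTE xm) eqxx.
  case/andP => /eqP ppx cx.
  have pxm : p x != m by apply: contraNneq xm => pxm; rewrite -ppx pxm pm.
  have pxk : p x != k by apply: contraNneq xk => pxk; rewrite -ppx pxk pk.
  by rewrite (negbTE pxm) (negbTE pxk) ppx eqxx.
- move=> [p c]; rewrite inE => /andP [/colored_matchingsP Hpc /= /eqP pm].
  have [ppm cm] := matching_at_in mA (Hpc m); have [_ ck] := matching_at_in kA (Hpc k).
  rewrite pm in ppm cm; rewrite ppm in ck.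
  congr (_, _); apply/ffunP => x; rewrite !ffun_updE.
  + by case: (x =P k) => [->|_]; [rewrite ppm | case: (x =P m) => [->|]].
  + by case: (x =P k) => [->|_]; [rewrite ck | case: (x =P m) => [->|]; rewrite ?cm].
- move=> [p c] /colored_matchingsP Hpc.
  have [pm cm] := matching_at_out mB (Hpc m); have [pk ck] := matching_at_out kB (Hpc k).
  congr (_, _); apply/ffunP => x; rewrite !ffun_updE.
  + by case: (x =P k) => [->|_]; [rewrite pk | case: (x =P m) => [->|]].
  + by case: (x =P k) => [->|_]; [rewrite ck | case: (x =P m) => [->|]].
Qed.

Lemma card_colored_matchings_rec A m : m \in A ->
  #|colored_matchings A| =
    2 * #|colored_matchings (A :\ m)| + \sum_(k in A :\ m) #|colored_matchings (A :\ m :\ k)|.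
Proof.
move=> mA.
have fiber_card k : \sum_(pc in colored_matchings A | pc.1 m == k) 1 =
    #|[set pc in colored_matchings A | pc.1 m == k]|.
  by rewrite -sum1_card; apply: eq_bigl => pc; rewrite !inE.
rewrite -sum1_card (partition_big (fun pc : matching => pc.1 m) predT) //=.
rewrite (bigD1 m) //= fiber_card card_colored_matchings_fixed //; congr (_ + _).
rewrite (bigID (mem A)) /= addnC big1 => [|k /andP [km kA]]; last first.
  rewrite fiber_card; apply/eqP; rewrite cards_eq0; apply/eqP/setP => -[p c].
  rewrite !inE; apply/negbTE/andP => -[/forallP Hpc /= /eqP pm].
  have [ppm _] := matching_at_in mA (Hpc m); have [pk _] := matching_at_out kA (Hpc k).
  by move: km; rewrite -ppm pm pk eqxx.
rewrite add0n; apply: eq_big => [k | k /andP [km kA]]; first by rewrite !inE andbC.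
by rewrite fiber_card card_colored_matchings_paired.
Qed.

Lemma colored_matchings0 : #|colored_matchings set0| = 1.
Proof.
transitivity #|[set ([ffun x => x], [ffun=> color1]) : matching]|; last exact: cards1.
apply: eq_card => -[p c].
rewrite !inE; apply/forallP/eqP => [Hpc | [-> ->] x].
  have Hx x := matching_at_out (negbT (in_set0 x)) (Hpc x).
  by congr (_, _); apply/ffunP => x; rewrite ffunE; case: (Hx x).
by rewrite /matching_at in_set0 !ffunE !eqxx.
Qed.

End ColoredMatchings.

Fixpoint bicolored_involutions (k : nat) : nat :=
  match k with
  | 0 => 1
  | 1 => 2
  | (k1.+1 as k2).+1 => 2 * bicolored_involutions k2 + k2 * bicolored_involutions k1
  end.

Lemma bicolored_involutionsS k :
  bicolored_involutions k.+1 = 2 * bicolored_involutions k + k * bicolored_involutions k.-1.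
Proof. by case: k. Qed.

Lemma card_colored_matchings n (A : {set 'I_n}) :
  #|colored_matchings A| = bicolored_involutions #|A|.
Proof.
move cardA: #|A| => k; elim/ltn_ind: k A cardA => -[|k] IH A cardA.
  by move/eqP: cardA; rewrite cards_eq0 => /eqP ->; rewrite colored_matchings0.
have [m mA] : exists m, m \in A by apply/set0Pn; rewrite -cards_eq0 cardA.
have cardAm : #|A :\ m| = k by move: cardA; rewrite (cardsD1 m) mA add1n => -[].
rewrite (card_colored_matchings_rec mA) bicolored_involutionsS (IH k) //.
rewrite (eq_bigr (fun=> bicolored_involutions k.-1)) => [|j jAm]; last first.
  by apply: IH; rewrite ?ltnS ?leq_pred // -cardAm (cardsD1 j (A :\ m)) jAm.
by rewrite sum_nat_const cardAm mulnC.
Qed.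

Definition matching_partition n (p : {ffun 'I_n -> 'I_n}) : {set {set 'I_n}} :=
  [set [set x; p x] | x : 'I_n].

Definition avoiding n (s : colored_partition n) : bool :=
  [&& is_colored_partition s, ~~ contains_1111 s & ~~ contains_1112 s].

Section MatchingPartition.

Variables (n : nat) (p : {ffun 'I_n -> 'I_n}).
Hypothesis pK : involutive p.

Lemma pair_block_id x z : z \in [set x; p x] -> [set x; p x] = [set z; p z].
Proof. by rewrite !inE => /orP [] /eqP ->; rewrite ?pK // setUC. Qed.

Lemma pair_block_partner x i j : i \in [set x; p x] -> j \in [set x; p x] -> i != j ->
  j = p i /\ p i != i.
Proof.
move=> ix jx ij; move: jx; rewrite (pair_block_id ix) !inE eq_sym (negbTE ij) /= => /eqP jE.
by split; rewrite // -jE eq_sym.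
Qed.

Lemma partition_matching_partition : partition (matching_partition p) [set: 'I_n].
Proof.
rewrite /partition; apply/and3P; split.
- apply/eqP/setP => y; rewrite inE; apply/bigcupP.
  by exists [set y; p y]; [apply: imset_f | rewrite set21].
- apply/trivIsetP => _ _ /imsetP [x _ ->] /imsetP [y _ ->].
  apply: contraNT; rewrite -setI_eq0 => /set0Pn [z]; rewrite in_setI => /andP [zx zy].
  by rewrite (pair_block_id zx) (pair_block_id zy).
- by apply/imsetP => -[x _ /setP /(_ x)]; rewrite set21 inE.
Qed.

Lemma matching_partition_avoiding (c : {ffun 'I_n -> 'I_2}) :
  (forall x, p x != x -> c x = pair_color x (p x)) -> avoiding (matching_partition p, c).
Proof.
move=> pc; apply/and3P; split; first exact: partition_matching_partition.
- apply/existsP => -[_ /andP [/imsetP [x _ ->]]].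
  case/existsP => i /andP [ix /existsP [j /andP [jx /andP [ij /eqP cij]]]].
  have [jE pii] := pair_block_partner ix jx ij.
  have ppi : p (p i) != p i by rewrite pK eq_sym.
  have := pair_color_swap pii; rewrite -(pc _ pii) -[X in pair_color _ X](pK i) -(pc _ ppi).
  by rewrite -jE cij eqxx.
- apply/existsP => -[_ /andP [/imsetP [x _ ->]]].
  case/existsP => i /andP [ix /existsP [j /andP [jx /and3P [lt_ij /eqP ci /eqP cj]]]].
  have ij : i != j by apply: contraTneq lt_ij => ->; rewrite ltnn.
  have [jpi pii] := pair_block_partner ix jx ij.
  by move: ci; rewrite (pc _ pii) -jpi /pair_color lt_ij.
Qed.

Lemma matching_partition_inj (p' : {ffun 'I_n -> 'I_n}) :
  matching_partition p' = matching_partition p -> p' = p.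
Proof.
move=> eq_p'p; apply/ffunP => x.
have /imsetP [y _ Exy] : [set x; p' x] \in matching_partition p.
  by rewrite -eq_p'p; apply: imset_f.
have xy : x \in [set y; p y] by rewrite -Exy set21.
rewrite (pair_block_id xy) in Exy.
have : p' x \in [set x; p x] by rewrite -Exy set22.
rewrite !inE => /orP [/eqP p'xx | /eqP //].
have : p x \in [set x; p' x] by rewrite Exy set22.
by rewrite p'xx !inE orbb => /eqP ->.
Qed.

End MatchingPartition.

Section AvoidingPartition.

Variables (n : nat) (P : {set {set 'I_n}}) (c : {ffun 'I_n -> 'I_2}).
Hypothesis avoidingPc : avoiding (P, c).

Let partP : partition P [set: 'I_n].
Proof. by case/and3P: avoidingPc. Qed.

Let trivP : trivIset P.
Proof. by case/and3P: partP. Qed.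

Let mem_pblockP x : x \in pblock P x.
Proof. by rewrite mem_pblock (cover_partition partP) inE. Qed.

Let pblockP x : pblock P x \in P.
Proof. by rewrite pblock_mem // (cover_partition partP) inE. Qed.

Lemma block_colors_neq B i j : B \in P -> i \in B -> j \in B -> i != j -> c i != c j.
Proof.
move=> BP iB jB ij; case/and3P: avoidingPc => _ + _; apply: contraNN => cij.
by apply/existsP; exists B; rewrite BP; apply/existsP; exists i; rewrite iB;
   apply/existsP; exists j; rewrite jB ij.
Qed.

Lemma block_colors_sorted B i j : B \in P -> i \in B -> j \in B -> i < j ->
  c i = color1 -> c j != color2.
Proof.
move=> BP iB jB lt_ij ci; case/and3P: avoidingPc => _ _; apply: contraNN => cj.
by apply/existsP; exists B; rewrite BP; apply/existsP; exists i; rewrite iB;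
   apply/existsP; exists j; rewrite jB lt_ij ci.
Qed.

Definition partner : {ffun 'I_n -> 'I_n} :=
  [ffun x => odflt x [pick y in pblock P x | y != x]].

(* Two colors and no repeated color inside a block force blocks of size at most 2. *)
Lemma pblock_partner x : pblock P x = [set x; partner x].
Proof.
rewrite ffunE; case: pickP => [y /andP [yPx yx] | no_y] /=.
- apply/setP => z; rewrite !inE; apply/idP/idP => [zPx|]; last first.
    by case/orP => /eqP ->.
  case: (z =P x) => //= /eqP zx; apply/negPn/negP => zy.
  have cPx := block_colors_neq (pblockP x).
  have cxy : c x != c y by apply: cPx; rewrite // eq_sym.
  have cxz : c x != c z by apply: cPx; rewrite // eq_sym.
  have cyz : c y != c z by apply: cPx; rewrite // eq_sym.
  by rewrite (ord2_neq_trans cxy cxz) eqxx in cyz.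
- apply/setP => z; rewrite !inE orbb; apply/idP/eqP => [zPx|->] //.
  by apply/eqP; apply: contraFT (no_y z) => zx; rewrite zPx.
Qed.

Lemma partnerK : involutive partner.
Proof.
move=> x; have pxPx : partner x \in pblock P x by rewrite pblock_partner set22.
have := same_pblock trivP pxPx; rewrite !pblock_partner => E.
have : x \in [set partner x; partner (partner x)] by rewrite E set21.
by rewrite !inE => /orP [/eqP xpx | /eqP //]; rewrite -xpx -xpx.
Qed.

Lemma partner_color x : partner x != x -> c x = pair_color x (partner x).
Proof.
move=> pxx; have pxPx : partner x \in pblock P x by rewrite pblock_partner set22.
have cne : c x != c (partner x) by apply: block_colors_neq pxPx _; rewrite // eq_sym.
rewrite /pair_color; case: ifP => [lt_xpx | /negbT le_pxx].
- case: (ord2P (c x)) => // cx; move: cne; rewrite cx => /ord2_neq_trans cpx.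
  move: (block_colors_sorted (pblockP x) (mem_pblockP x) pxPx lt_xpx cx).
  by rewrite (cpx color2) // eqxx.
- have lt_pxx : partner x < x by rewrite ltn_neqAle leqNgt le_pxx andbT.
  case: (ord2P (c x)) => // cx; move: cne; rewrite cx => /ord2_neq_trans cpx.
  by move: (block_colors_sorted (pblockP x) pxPx (mem_pblockP x) lt_pxx (cpx color1 isT));
    rewrite cx eqxx.
Qed.

Lemma avoiding_matching_partition : P = matching_partition partner.
Proof.
apply/setP => B; apply/idP/imsetP => [BP | [x _ ->]]; last by rewrite -pblock_partner.
have /set0Pn [x xB] : B != set0 by apply: contraTneq BP => ->; case/and3P: partP.
by exists x => //; rewrite -pblock_partner (def_pblock trivP BP xB).
Qed.

End AvoidingPartition.

Lemma a_colored_matchings n : a n = #|colored_matchings [set: 'I_n]|.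
Proof.
apply: (card_in_bij (f := fun s : colored_partition n => (partner s.1, s.2))
                    (g := fun pc => (matching_partition pc.1, pc.2))).
- move=> [P c]; rewrite inE => avPc; apply/colored_matchingsTP.
  by split; [exact: (partnerK avPc) | exact: (partner_color avPc)].
- move=> [p c] /colored_matchingsTP [pK pc]; rewrite inE.
  exact: matching_partition_avoiding.
- by move=> [P c]; rewrite inE => avPc; rewrite /= -(avoiding_matching_partition avPc).
- move=> [p c] /colored_matchingsTP [pK pc].
  have avPc := matching_partition_avoiding pK pc.
  by rewrite /= (matching_partition_inj pK (esym (avoiding_matching_partition avPc))).
Qed.

Theorem mainTheorem4 (n : nat) :
  3 <= n -> a n = 2 * a (n - 1) + (n - 1) * a (n - 2).
Proof.
rewrite !a_colored_matchings !card_colored_matchings !cardsT !card_ord.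
by case: n => [|[|[|k]]].
Qed.
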